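(* Let $K$ be a field, $\nu$ a valuation on $K[x]$, and $\mathbf{Q}\subseteq K[x]$ a set of monic nonconstant polynomials such that: (1) $\nu_Q$ is a valuation on $K[x]$ for every $Q\in\mathbf{Q}$; (2) for every finite nonempty subset $\mathcal F\subseteq\mathbf{Q}$ there exists $Q'\in\mathcal F$ with $\nu_{Q'}(Q)=\nu(Q)$ for every $Q\in\mathcal F$; (3) $\mathbf{Q}$ satisfies (GS1$^*$). Then $\mathbf{Q}$ is a complete set for $\nu$.
   Context: $\nu:K[x]\to\Gamma\cup\{\infty\}$ is a valuation ($\Gamma$ an ordered abelian group) with $\nu(f)=\infty$ only for $f=0$. For monic nonconstant $Q$, the $Q$-expansion of $f$ is the unique expression $f=f_0+f_1Q+\dots+f_nQ^n$ with each $f_i=0$ or $\deg f_i<\deg Q$, and $\nu_Q(f)=\min_i\nu(f_iQ^i)$. A set $\mathbf{Q}$ of monic nonconstant polynomials is complete for $\nu$ if for every nonconstant $f\in K[x]$ there is $Q\in\mathbf{Q}$ with $\deg Q\le\deg f$ and $\nu_Q(f)=\nu(f)$. For finitely supported $\lambda:\mathbf{Q}\to\mathbb{N}_0$ let $\mathbf{Q}^\lambda=\prod_{\lambda(Q)\neq0}Q^{\lambda(Q)}$. (GS1$^*$): for every $f\in K[x]$ there exist $r\ge0$, $a_1,\dots,a_r\in K$ and finitely supported $\lambda_1,\dots,\lambda_r:\mathbf{Q}\to\mathbb{N}_0$ with $f=\sum_{i=1}^ra_i\mathbf{Q}^{\lambda_i}$, $\nu(a_i\mathbf{Q}^{\lambda_i})\ge\nu(f)$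 for all $i$, and $\deg Q\le\deg f$ whenever $\lambda_i(Q)\ne0$ for some $i$. *)

From HB Require Import structures.
From mathcomp Require Import all_boot all_order all_algebra.
Set Implicit Arguments. Unset Strict Implicit. Unset Printing Implicit Defensive.
Import Order.TTheory GRing.Theory Num.Theory.
Local Open Scope ring_scope.

Definition ordered_abelian_group (G : zmodType) (le : rel G) : Prop :=
  [/\ reflexive le, transitive le, antisymmetric le, total le &
      forall a b c : G, le a b -> le (a + c) (b + c)].

(* Gamma \cup {oo} is represented as option G, with None = oo. *)
Definition ole (G : zmodType) (le : rel G) (x y : option G) : bool :=
  match x, y with
  | _, None => true
  | None, Some _ => false
  | Some a, Some b => le a b
  end.

Definition oadd (G : zmodType) (x y : option G) : option G :=
  match x, y with
  | Some a, Some b => Some (a + b)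
  | _, _ => None
  end.

Definition omin (G : zmodType) (le : rel G) (x y : option G) : option G :=
  if ole le x y then x else y.

Definition is_valuation (K : fieldType) (G : zmodType) (le : rel G)
    (nu : {poly K} -> option G) : Prop :=
  [/\ forall f, nu f = None <-> f = 0,
      forall f g, nu (f * g) = oadd (nu f) (nu g) &
      forall f g, ole le (omin le (nu f) (nu g)) (nu (f + g))].

(* The i-th coefficient f_i of the Q-expansion f = sum_i f_i Q^i
   (deg f_i < deg Q), computed by Euclidean division. *)
Definition qcoef (K : fieldType) (Q f : {poly K}) (i : nat) : {poly K} :=
  (f %/ Q ^+ i) %% Q.

(* nu_Q(f) = min_i nu(f_i Q^i); for nonconstant Q all f_i with i >= size f
   vanish, so the minimum is taken over i < size f (empty min = oo). *)
Definition nuQ (K : fieldType) (G : zmodType) (le : rel G)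
    (nu : {poly K} -> option G) (Q f : {poly K}) : option G :=
  \big[omin le/None]_(i < size f) nu (qcoef Q f i * Q ^+ i).

Definition monic_nonconstant (K : fieldType) (Q : {poly K}) : Prop :=
  Q \is monic /\ (1 < size Q)%N.

Definition complete_set (K : fieldType) (G : zmodType) (le : rel G)
    (nu : {poly K} -> option G) (QQ : {poly K} -> Prop) : Prop :=
  forall f : {poly K}, (1 < size f)%N ->
    exists Q, [/\ QQ Q, (size Q <= size f)%N & nuQ le nu Q f = nu f].

(* Property GS1-star: a finitely supported lambda : QQ -> N is represented by a finite
   multiset (seq) of elements of QQ, and Q^lambda by the product over it. *)
Definition GS1star (K : fieldType) (G : zmodType) (le : rel G)
    (nu : {poly K} -> option G) (QQ : {poly K} -> Prop) : Prop :=
  forall f : {poly K},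
    exists ts : seq (K * seq {poly K}),
      [/\ f = \sum_(t <- ts) t.1%:P * \prod_(Q <- t.2) Q,
          forall t, t \in ts -> ole le (nu f) (nu (t.1%:P * \prod_(Q <- t.2) Q)) &
          forall t Q, t \in ts -> Q \in t.2 -> QQ Q /\ (size Q <= size f)%N].

From HB Require Import structures.
From mathcomp Require Import all_boot all_order all_algebra.
Import Order.TTheory GRing.Theory Num.Theory.
Set Implicit Arguments. Unset Strict Implicit. Unset Printing Implicit Defensive.
Local Open Scope ring_scope.

(* Let f be nonconstant.  By property GS1-star write f = sum_i a_i Q^lambda_i with
   nu(a_i Q^lambda_i) >= nu(f) and all Q occurring of degree <= deg f.  The
   polynomials occurring form a finite set F, nonempty because f is not
   constant, and hypothesis (2) gives Q' in F with nu_Q' = nu on F.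
   - nu_Q'(f) <= nu(f) holds for every nonconstant Q': expand f in
     powers of Q' and use the ultrametric inequality for nu.
   - nu_Q'(f) >= nu(f): nu_Q' is a valuation by (1) and agrees with nu on
     constants and on F, hence on every monomial a_i Q^lambda_i; the
     ultrametric inequality for nu_Q' then gives
     nu_Q'(f) >= min_i nu(a_i Q^lambda_i) >= nu(f). *)

Section ExtendedOrder.
Variables (G : zmodType) (le : rel G).
Hypotheses (le_refl : reflexive le) (le_trans : transitive le)
  (le_anti : antisymmetric le) (le_total : total le).

Lemma ole_refl (x : option G) : ole le x x.
Proof. by case: x => //= a; apply: le_refl. Qed.

Lemma ole_trans (x y z : option G) : ole le x y -> ole le y z -> ole le x z.
Proof. by case: x => [a|]; case: y => [b|]; case: z => [c|] //=; apply: le_trans. Qed.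

Lemma ole_anti (x y : option G) : ole le x y -> ole le y x -> x = y.
Proof.
by case: x => [a|]; case: y => [b|] //= hab hba; congr Some; apply: le_anti; rewrite hab hba.
Qed.

Lemma omin_lel (x y : option G) : ole le (omin le x y) x.
Proof.
rewrite /omin; case: ifP => [_|hxy]; first exact: ole_refl.
by case: x y hxy => [a|] [b|] //= hab; have := le_total a b; rewrite hab.
Qed.

Lemma omin_ler (x y : option G) : ole le (omin le x y) y.
Proof. by rewrite /omin; case: ifP => // _; apply: ole_refl. Qed.

Lemma omin_glb (z x y : option G) : ole le z x -> ole le z y -> ole le z (omin le x y).
Proof. by rewrite /omin; case: ifP. Qed.

Lemma bigmin_lel (I : eqType) (s : seq I) (F : I -> option G) (j : I) :
  j \in s -> ole le (\big[omin le/None]_(i <- s) F i) (F j).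
Proof.
elim: s => //= a s IHs; rewrite inE big_cons => /predU1P [-> | js].
  exact: omin_lel.
exact: ole_trans (omin_ler _ _) (IHs js).
Qed.

Lemma valuation_sum_ge (K : fieldType) (w : {poly K} -> option G)
    (I : eqType) (s : seq I) (g : I -> {poly K}) (x : option G) :
  is_valuation le w ->
  (forall i, i \in s -> ole le x (w (g i))) -> ole le x (w (\sum_(i <- s) g i)).
Proof.
case=> w_eqNone _ w_add; elim: s => [|a s IHs] hs.
  by rewrite big_nil (proj2 (w_eqNone 0) erefl); case: x {hs}.
rewrite big_cons; apply: ole_trans (w_add _ _); apply: omin_glb.
  by apply: hs; rewrite mem_head.
by apply: IHs => i si; apply: hs; rewrite in_cons si orbT.
Qed.

End ExtendedOrder.

Section QExpansion.
Variable K : fieldType.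

Lemma qexpansion_trunc (Q f : {poly K}) (n : nat) :
  f = \sum_(i < n) qcoef Q f i * Q ^+ i + (f %/ Q ^+ n) * Q ^+ n.
Proof.
elim: n => [|n IHn]; first by rewrite big_ord0 add0r expr0 divp1 mulr1.
rewrite big_ord_recr /= -addrA {1}IHn; congr (_ + _).
rewrite /qcoef exprSr -divp_divl {1}(divp_eq (f %/ Q ^+ n) Q).
by rewrite mulrDl addrC -mulrA (mulrC Q).
Qed.

Lemma size_exp_gt (Q : {poly K}) (n : nat) : (1 < size Q)%N -> (n < size (Q ^+ n))%N.
Proof.
move=> szQ; have Q0 : Q != 0 by rewrite -size_poly_gt0 (ltn_trans _ szQ).
have := size_exp Q n; have : size (Q ^+ n) != 0%N by rewrite size_poly_eq0 expf_neq0.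
case: (size (Q ^+ n)) => // m _ /= ->.
by rewrite ltnS leq_pmull // -subn1 subn_gt0.
Qed.

Lemma qexpansion (Q f : {poly K}) : (1 < size Q)%N ->
  f = \sum_(i < size f) qcoef Q f i * Q ^+ i.
Proof.
move=> szQ; rewrite {1}(qexpansion_trunc Q f (size f)).
by rewrite divp_small ?mul0r ?addr0 // size_exp_gt.
Qed.

(* A constant is its own Q-expansion, so nu_Q and nu agree on constants. *)
Lemma nuQ_const (G : zmodType) (le : rel G) (nu : {poly K} -> option G)
    (Q p : {poly K}) :
  (1 < size Q)%N -> (size p <= 1)%N -> nu 0 = None -> nuQ le nu Q p = nu p.
Proof.
move=> szQ szp nu0; rewrite /nuQ.
move: szp; rewrite leq_eqVlt ltnS leqn0 size_poly_eq0 => /predU1P [szp1 | /eqP ->].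
  rewrite szp1 big_ord_recl big_ord0 /qcoef expr0 divp1 mulr1 modp_small ?szp1 //.
  by rewrite /omin; case: (nu p).
by rewrite size_poly0 big_ord0 nu0.
Qed.

End QExpansion.

Section ValuationsOnPolynomials.
Variables (K : fieldType) (G : zmodType) (le : rel G).
Hypothesis le_oag : ordered_abelian_group le.

Lemma nuQ_le_nu (nu : {poly K} -> option G) (Q f : {poly K}) :
  is_valuation le nu -> (1 < size Q)%N -> ole le (nuQ le nu Q f) (nu f).
Proof.
case: le_oag => le_refl le_trans _ le_total _ nuV szQ.
rewrite {2}(qexpansion f szQ); apply: (valuation_sum_ge le_trans nuV) => i _.
exact: (bigmin_lel le_refl le_trans le_total) (mem_index_enum _).
Qed.

Lemma valuations_agree_monomial (w nu : {poly K} -> option G)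
    (c : K) (s : seq {poly K}) :
  is_valuation le w -> is_valuation le nu ->
  (forall a : K, w a%:P = nu a%:P) -> (forall Q, Q \in s -> w Q = nu Q) ->
  w (c%:P * \prod_(Q <- s) Q) = nu (c%:P * \prod_(Q <- s) Q).
Proof.
case=> _ w_mul _ [_ nu_mul _] agree_const agree_s.
rewrite w_mul nu_mul agree_const; congr (oadd _ _).
elim: s agree_s => [|Q s IHs] agree_s; first by rewrite !big_nil -polyC1 agree_const.
rewrite !big_cons w_mul nu_mul agree_s ?mem_head // IHs // => P sP.
by apply: agree_s; rewrite in_cons sP orbT.
Qed.

End ValuationsOnPolynomials.

Definition decomposition_support (K : fieldType) (ts : seq (K * seq {poly K})) :
  seq {poly K} := flatten (map snd ts).

Lemma mem_decomposition_support (K : fieldType) (ts : seq (K * seq {poly K}))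
    (t : K * seq {poly K}) (Q : {poly K}) :
  t \in ts -> Q \in t.2 -> Q \in decomposition_support ts.
Proof. by move=> tts Qt; apply/flattenP; exists t.2 => //; apply/mapP; exists t. Qed.

Lemma decomposition_support_nil (K : fieldType) (ts : seq (K * seq {poly K})) :
  decomposition_support ts = [::] ->
  (size (\sum_(t <- ts) t.1%:P * \prod_(Q <- t.2) Q)%R <= 1)%N.
Proof.
move=> supp0; suff -> : \sum_(t <- ts) t.1%:P * \prod_(Q <- t.2) Q
                        = (\sum_(t <- ts) t.1)%:P by apply: size_polyC_leq1.
rewrite rmorph_sum; apply: eq_big_seq => -[a [|Q s]] tts.
  by rewrite big_nil mulr1.
by have := mem_decomposition_support tts (mem_head Q s); rewrite supp0.
Qed.

Theorem proposition5p3 (K : fieldType) (G : zmodType) (le : rel G)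
    (nu : {poly K} -> option G) (QQ : {poly K} -> Prop) :
  ordered_abelian_group le ->
  is_valuation le nu ->
  (forall Q, QQ Q -> monic_nonconstant Q) ->
  (forall Q, QQ Q -> is_valuation le (nuQ le nu Q)) ->
  (forall F : seq {poly K}, F != [::] -> (forall Q, Q \in F -> QQ Q) ->
     exists2 Q', Q' \in F & forall Q, Q \in F -> nuQ le nu Q' Q = nu Q) ->
  GS1star le nu QQ ->
  complete_set le nu QQ.
Proof.
move=> le_oag nuV QQ_monic QQ_val QQ_min gs1 f szf.
have [ts [fE ts_ge ts_QQ]] := gs1 f.
set F := decomposition_support ts.
have F_QQ Q : Q \in F -> QQ Q /\ (size Q <= size f)%N.
  by case/flattenP => _ /mapP [t tts ->] Qt; apply: ts_QQ Qt.
have F_nil : F != [::].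
  by apply: contraTneq szf => /decomposition_support_nil; rewrite -fE -leqNgt.
have [Q' FQ' nuQ'_F] := QQ_min F F_nil (fun Q FQ => (F_QQ Q FQ).1).
have [QQ' szQ'f] := F_QQ Q' FQ'.
have szQ' := (QQ_monic Q' QQ').2.
have nu0 : nu 0 = None by case: nuV => nu_eqNone _ _; apply/nu_eqNone.
exists Q'; split => //; case: (le_oag) => _ le_trans le_anti _ _.
apply: (ole_anti le_anti); first exact: nuQ_le_nu.
rewrite {2}fE; apply: (valuation_sum_ge le_trans (QQ_val Q' QQ')) => t tts.
rewrite (valuations_agree_monomial _ (QQ_val Q' QQ') nuV) ?ts_ge // => [a|Q tQ].
  by rewrite nuQ_const // size_polyC leq_b1.
exact/nuQ'_F/(mem_decomposition_support tts).
Qed.
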